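(* Let $C_{\min}=\min_l C_l$, and run Algorithm 3 (see context) on an arbitrary sequence of packet arrivals. Then: (i) the resulting $\{X_{mk}\}$ is feasible for $\textbf{Schedule}$, i.e. capacities $C_l$ are never exceeded; (ii) the resulting $\{\alpha_m\},\{\beta_{lt}\}$ (final values) are feasible for $\textbf{Dual}$; (iii) there is a constant $B<\infty$, depending on $L$ but not on $C_{\min}$, such that $$\Gamma_{opt}\le\Big(2(1+\ln L)+\frac{B}{C_{\min}}\Big)\sum_{m,k}X_{mk}.$$ Consequently, Algorithm 3 is $(1,\,2(1+\ln L))$-competitive in the limit $C_{\min}\to\infty$.
   Context: Network model. The network is a directed graph with a finite set $\mathcal L$ of links. Each link $l$ has an integer capacity $C_l\ge1$ (packets per time slot). Time is slotted, $t=1,2,\dots$. $\mathcal M$ is a finite set of packets. Packet $m$ has a source node $s_m$, a destination node $\mathrm{dst}_m$, an arrival slot $a_m$ and a deadline slot $f_m$. Valid schedules. A valid schedule for $m$ is a set $k=\{(l_1,t_1),\dots,(l_j,t_j)\}$ of (link, slot) pairs satisfying two conditions: $l_1,\dots,l_j$ form a directed path from $s_m$ to $\mathrm{dst}_m$, and $a_m\le t_1<t_2<\dots<t_j\le f_m$. $V(m)$ denotes the set of valid schedules of $m$. $L\ge1$ is an integer with $|k|\le L$ for all $m\in\mathcal M$, $k\in V(m)$. $\textbf{Schedule}(R)$ is the LP: maximize $\sum_{m,k\in V(m)}X_{mk}$ subject to three constraints: - $\sum_{k\in V(m)}X_{mk}\le1$ for all $m$; - $\sum_{m,k:(l,t)\in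 k}X_{mk}\le RC_l$ for all $l,t$; - $X_{mk}\ge0$. $\textbf{Schedule}$ is $\textbf{Schedule}(1)$, and $\Gamma_{opt}$ denotes its optimal value. $\textbf{Dual}$ is the LP: minimize $\sum_m\alpha_m+\sum_{l,t}C_l\beta_{lt}$ subject to three constraints: - $\alpha_m+\sum_{(l,t)\in k}\beta_{lt}\ge1$ for all $m$ and $k\in V(m)$; - $\alpha_m\ge0$; - $\beta_{lt}\ge0$. Competitive ratio. An online policy $\eta$ is $(R,\rho)$-competitive if $\Gamma_{opt}/\Gamma_\eta(R)\le\rho$ for every arrival sequence, where $\Gamma_\eta(R)$ is the number of packets $\eta$ delivers with capacities $RC_l$. Define the function $$g_L(x)=\begin{cases}\dfrac{e^{x}-1}{L\,(e^{1/(\ln L+1)}-1)}, & 0\le x\le \frac{1}{\ln L+1},\\[2mm] e^{(x-1)(\ln L+1)}, & x\ge\frac{1}{\ln L+1}.\end{cases}$$ Algorithm 3. 1. Initialize all $\alpha_m,X_{mk}$ to $0$. For each link $l$ and slot $t$, let $n_{lt}$ be the number of packets scheduled so far on $(l,t)$ (initially $0$), and maintain $\beta_{lt}=g_L(n_{lt}/C_l)$ (initially $0$). 2. For each arriving packet $m$ in order: - Let $k^*\in\arg\max_{k\in V(m)}\big(1-\sum_{(l,t)\in k}\beta_{lt}\big)$. - If $1-\sum_{(l,t)\in k^*}\beta_{lt}>0$, do the following. Set $\alpha_m=1-\sum_{(l,t)\in k^*}\beta_{lt}$, using current values. For each $(l,t)\in k^*$ increment $n_{lt}$ by one and reset $\beta_{lt}=g_L(n_{lt}/C_l)$.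 Set $X_{mk^*}=1$, and transmit $m$ along $k^*$. - Otherwise, drop $m$. *)

From Stdlib Require Import Reals Lra Lia List Bool.
Import ListNotations.
Open Scope R_scope.

(** Links are indexed 0 .. nL-1; link l goes from node [ltail l] to node
    [lhead l] and has integer capacity [cap l] (packets per slot).
    Nodes are natural numbers. *)
Record network := Network {
  nL : nat;
  ltail : nat -> nat;
  lhead : nat -> nat;
  cap : nat -> nat
}.

(** Packets are indexed 0 .. nM-1, in the order in which they arrive
    (and are processed by the online algorithm). *)
Record packets := Packets {
  nM : nat;
  src : nat -> nat;
  dst : nat -> nat;
  arr : nat -> nat;
  dl  : nat -> nat
}.

(** A schedule is the list [(l_1,t_1); ...; (l_j,t_j)] of (link, slot) pairs,
    listed in path order (equivalently, in increasing slot order). *)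
Definition sched := list (nat * nat).

Fixpoint is_walk (N : network) (s d : nat) (ls : list nat) : Prop :=
  match ls with
  | [] => s = d
  | l :: r => (l < nL N)%nat /\ ltail N l = s /\ is_walk N (lhead N l) d r
  end.

Definition is_path (N : network) (s d : nat) (ls : list nat) : Prop :=
  is_walk N s d ls /\ NoDup (s :: map (lhead N) ls).

Fixpoint times_ok (lo hi : nat) (ts : list nat) : Prop :=
  match ts with
  | [] => True
  | t :: r => (lo <= t <= hi)%nat /\ times_ok (S t) hi r
  end.

Definition valid_sched (N : network) (P : packets) (m : nat) (k : sched) : Prop :=
  is_path N (src P m) (dst P m) (map fst k) /\
  times_ok (arr P m) (dl P m) (map snd k).

Definition memlt (l t : nat) (k : sched) : bool :=
  existsb (fun p => andb (Nat.eqb (fst p) l) (Nat.eqb (snd p) t)) k.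

(** A (finitely supported) solution X is a list of entries ((m,k), X_mk);
    absent pairs have X_mk = 0. *)
Definition lpsol := list ((nat * sched) * R).

Definition sumR (xs : list R) : R := fold_right Rplus 0 xs.

Definition objective (X : lpsol) : R := sumR (map snd X).

Definition schedule_feasible (N : network) (P : packets) (Rf : R) (X : lpsol) : Prop :=
  NoDup (map fst X) /\
  (forall e, In e X ->
     (fst (fst e) < nM P)%nat /\ valid_sched N P (fst (fst e)) (snd (fst e)) /\ 0 <= snd e) /\
  (forall m, (m < nM P)%nat ->
     sumR (map snd (filter (fun e => Nat.eqb (fst (fst e)) m) X)) <= 1) /\
  (forall l t, (l < nL N)%nat ->
     sumR (map snd (filter (fun e => memlt l t (snd (fst e))) X)) <= Rf * INR (cap N l)).

Definition sum_beta (beta : nat -> nat -> R) (k : sched) : R :=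
  sumR (map (fun p => beta (fst p) (snd p)) k).

Definition dual_feasible (N : network) (P : packets)
    (alpha : nat -> R) (beta : nat -> nat -> R) : Prop :=
  (forall m k, (m < nM P)%nat -> valid_sched N P m k -> alpha m + sum_beta beta k >= 1) /\
  (forall m, (m < nM P)%nat -> alpha m >= 0) /\
  (forall l t, (l < nL N)%nat -> beta l t >= 0).

Definition gL (L : nat) (x : R) : R :=
  let th := 1 / (ln (INR L) + 1) in
  if Rle_dec x th then (exp x - 1) / (INR L * (exp th - 1))
  else exp ((x - 1) * (ln (INR L) + 1)).

Definition beta_of (L : nat) (N : network) (n : nat -> nat -> nat) (l t : nat) : R :=
  gL L (INR (n l t) / INR (cap N l)).

Definition update (n : nat -> nat -> nat) (d : option sched) : nat -> nat -> nat :=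
  match d with
  | None => n
  | Some k => fun l t => (n l t + if memlt l t k then 1 else 0)%nat
  end.

(** decisions: [dec m = Some k] means packet m is transmitted along k,
    [None] means it is dropped.  [counts dec m] = the counts n_{lt} just
    before packet m is processed. *)
Fixpoint counts (dec : nat -> option sched) (m : nat) : nat -> nat -> nat :=
  match m with
  | O => fun _ _ => O
  | S m' => update (counts dec m') (dec m')
  end.

(** [dec] is a possible execution of Algorithm 3 (any tie-breaking in the argmax). *)
Definition alg3_run (L : nat) (N : network) (P : packets) (dec : nat -> option sched) : Prop :=
  forall m, (m < nM P)%nat ->
    let b := beta_of L N (counts dec m) in
    match dec m with
    | Some k =>
        valid_sched N P m k /\
        (forall k', valid_sched N P m k' -> 1 - sum_beta b k' <= 1 - sum_beta b k) /\
        0 < 1 - sum_beta b k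
    | None =>
        forall k', valid_sched N P m k' -> 1 - sum_beta b k' <= 0
    end.

Definition alg_alpha (L : nat) (N : network) (dec : nat -> option sched) (m : nat) : R :=
  match dec m with
  | Some k => 1 - sum_beta (beta_of L N (counts dec m)) k
  | None => 0
  end.

Definition alg_beta (L : nat) (N : network) (P : packets) (dec : nat -> option sched) :
  nat -> nat -> R := beta_of L N (counts dec (nM P)).

Fixpoint alg_X_upto (dec : nat -> option sched) (m : nat) : lpsol :=
  match m with
  | O => []
  | S m' => alg_X_upto dec m' ++
            match dec m' with Some k => [((m', k), 1)] | None => [] end
  end.

Definition alg_X (P : packets) (dec : nat -> option sched) : lpsol :=
  alg_X_upto dec (nM P).

(** C_min = min_l C_l (for nL >= 1) *)
Definition Cmin (N : network) : nat :=
  fold_right Nat.min (cap N 0) (map (cap N) (seq 0 (nL N))).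

(* Algorithm 3 is a primal-dual scheme.  A full slot costs [g_L(1) >= 1], so a
   schedule through it has no positive gain and capacities are respected; prices
   only grow, so the dual constraint of a packet, satisfied when it is processed,
   stays satisfied.  By weak duality [Gamma_opt] is at most the dual objective
   [sum_m alpha_m + sum_lt C_l beta_lt], and each accepted packet raises it by at
   most [2 F] with [F = K + K^2 e^K / C_min], [K = 1 + ln L]: [alpha_m = 1 - s]
   where [s] is the price of its schedule, and one more packet on [(l, t)] raises
   [C_l beta_lt] by at most [F (beta_lt + A / K)], with [A = 1 / (L (e^(1/K) - 1))]
   the factor of the first piece of [g_L], because [g_L + A / K] grows at most
   like [exp (K x)].  Over at most [L] slots this is [F (s + L A / K) <= F (s + 1)],
   and [1 - s + F (s + 1) <= 2 F] as [s < 1 <= F]. *)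

From Stdlib Require Import Reals List Bool Lra Lia.
Import ListNotations.
Open Scope R_scope.

Lemma sumR_app (a b : list R) : sumR (a ++ b) = sumR a + sumR b.
Proof. induction a as [|x a IH]; simpl; [ring | rewrite IH; ring]. Qed.

Lemma sumR_le {A : Type} (f g : A -> R) l : (forall x, In x l -> f x <= g x) ->
  sumR (map f l) <= sumR (map g l).
Proof.
  induction l as [|x l IH]; simpl; intro H; [lra|].
  pose proof (H x (or_introl eq_refl)). pose proof (IH (fun y hy => H y (or_intror hy))). lra.
Qed.

Lemma sumR_ext {A : Type} (f g : A -> R) l : (forall x, In x l -> f x = g x) ->
  sumR (map f l) = sumR (map g l).
Proof. intro H. f_equal. now apply map_ext_in. Qed.

Lemma sumR_plus {A : Type} (f g : A -> R) l :
  sumR (map (fun x => f x + g x) l) = sumR (map f l) + sumR (map g l).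
Proof. induction l as [|x l IH]; simpl; [ring | rewrite IH; ring]. Qed.

Lemma sumR_scal {A : Type} c (f : A -> R) l : sumR (map (fun x => c * f x) l) = c * sumR (map f l).
Proof. induction l as [|x l IH]; simpl; [ring | rewrite IH; ring]. Qed.

Lemma sumR_scalr {A : Type} c (f : A -> R) l : sumR (map (fun x => f x * c) l) = sumR (map f l) * c.
Proof. induction l as [|x l IH]; simpl; [ring | rewrite IH; ring]. Qed.

Lemma sumR_eq0 {A : Type} (f : A -> R) l : (forall x, In x l -> f x = 0) -> sumR (map f l) = 0.
Proof. induction l as [|x l IH]; simpl; intro H; [reflexivity|]. rewrite H, IH; auto; ring. Qed.

Lemma sumR_nonneg {A : Type} (f : A -> R) l : (forall x, In x l -> 0 <= f x) -> 0 <= sumR (map f l).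
Proof. intro H. rewrite <- (sumR_eq0 (fun _ => 0) l) by auto. now apply sumR_le. Qed.

Lemma sumR_ge_elem {A : Type} (f : A -> R) l x : (forall y, In y l -> 0 <= f y) -> In x l ->
  f x <= sumR (map f l).
Proof.
  induction l as [|y l IH]; simpl; intros H Hx; [contradiction|].
  assert (0 <= sumR (map f l)) by (apply sumR_nonneg; auto).
  pose proof (H y (or_introl eq_refl)).
  destruct Hx as [<- | Hx]; [lra|]. pose proof (IH (fun z hz => H z (or_intror hz)) Hx). lra.
Qed.

Lemma sumR_le_length {A : Type} (f : A -> R) l c : (forall x, In x l -> f x <= c) ->
  sumR (map f l) <= INR (length l) * c.
Proof.
  induction l as [|x l IH]; intro H; [simpl; lra|].
  cbn [map sumR fold_right length]. rewrite S_INR.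
  pose proof (H x (or_introl eq_refl)). pose proof (IH (fun y hy => H y (or_intror hy))).
  unfold sumR in *. lra.
Qed.

Lemma sumR_comm {A B : Type} (f : A -> B -> R) la lb :
  sumR (map (fun a => sumR (map (fun b => f a b) lb)) la) =
  sumR (map (fun b => sumR (map (fun a => f a b) la)) lb).
Proof.
  induction la as [|a la IH]; simpl.
  - symmetry. now apply sumR_eq0.
  - rewrite IH, <- sumR_plus. reflexivity.
Qed.

Lemma sumR_filter {A : Type} (p : A -> bool) (f : A -> R) l :
  sumR (map f (filter p l)) = sumR (map (fun x => if p x then f x else 0) l).
Proof.
  induction l as [|x l IH]; simpl; [reflexivity|]. destruct (p x); simpl; rewrite IH; ring.
Qed.

Lemma sumR_indicator_single {A : Type} (eq_dec : forall x y : A, {x = y} + {x <> y})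
    (f : A -> R) x l : NoDup l ->
  sumR (map (fun y => if eq_dec x y then f y else 0) l) = if in_dec eq_dec x l then f x else 0.
Proof.
  induction l as [|y l IH]; intro Hnd; [reflexivity|]. inversion Hnd as [|? ? Hy Hl]; subst.
  cbn [map sumR fold_right]. fold (sumR (map (fun y => if eq_dec x y then f y else 0) l)).
  rewrite IH by exact Hl.
  destruct (in_dec eq_dec x (y :: l)) as [Hin | Hnin]; destruct (in_dec eq_dec x l);
    destruct (eq_dec x y); simpl in *; subst; try tauto; try ring.
  destruct Hin; [congruence | contradiction].
Qed.

Lemma sumR_restrict_comm {A : Type} (eq_dec : forall x y : A, {x = y} + {x <> y})
    (f : A -> R) a b : NoDup a -> NoDup b ->
  sumR (map (fun x => if in_dec eq_dec x b then f x else 0) a) =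
  sumR (map (fun y => if in_dec eq_dec y a then f y else 0) b).
Proof.
  revert b. induction a as [|x a IH]; intros b Ha Hb.
  - symmetry. apply sumR_eq0. intros y _. reflexivity.
  - inversion Ha as [|? ? Hx Ha']; subst. cbn [map sumR fold_right].
    fold (sumR (map (fun x => if in_dec eq_dec x b then f x else 0) a)).
    rewrite IH, <- sumR_indicator_single, <- sumR_plus by assumption.
    apply sumR_ext. intros y _.
    destruct (in_dec eq_dec y (x :: a)) as [Hin | Hnin]; destruct (in_dec eq_dec y a);
      destruct (eq_dec x y); simpl in *; subst; try tauto; try ring.
Qed.

Lemma sumR_seq_indicator (c : nat -> R) k a n : (a <= k < a + n)%nat ->
  sumR (map (fun j => if Nat.eqb k j then c j else 0) (seq a n)) = c k.
Proof.
  revert a. induction n as [|n IH]; intros a h; [lia|]. simpl.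
  destruct (Nat.eqb_spec k a) as [-> | Hne].
  - rewrite sumR_eq0; [ring|]. intros j Hj. apply in_seq in Hj.
    destruct (Nat.eqb_spec a j); [lia | reflexivity].
  - rewrite IH by lia. ring.
Qed.

Lemma exp_le x y : x <= y -> exp x <= exp y.
Proof. intros [Hlt | ->]; [left; apply exp_increasing | right]; auto. Qed.

Lemma exp_ge1 x : 0 <= x -> 1 <= exp x.
Proof. intro hx. rewrite <- exp_0. now apply exp_le. Qed.

Lemma exp_sub1_le_quad s : 0 <= s -> exp s - 1 <= s + s ^ 2 * exp s.
Proof.
  intro hs. pose proof (exp_pos s) as hes.
  assert (Hinv : exp s * exp (- s) = 1)
    by (rewrite <- exp_plus, Rplus_opp_r; apply exp_0).
  assert (Hlin : exp s - 1 <= s * exp s).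
  { pose proof (exp_ineq1_le (- s)).
    assert (exp s * (1 + - s) <= exp s * exp (- s)) by (apply Rmult_le_compat_l; lra).
    nra. }
  assert (s * (exp s - 1) <= s * (s * exp s)) by (apply Rmult_le_compat_l; lra).
  nra.
Qed.

Lemma exp_mul_sub1_ge K d : 1 <= K -> 0 <= d -> K * (exp d - 1) <= exp (K * d) - 1.
Proof.
  intros hK hd. pose proof (exp_pos d) as hed.
  assert (Hsplit : exp (K * d) = exp d * exp ((K - 1) * d))
    by (rewrite <- exp_plus; f_equal; ring).
  assert (Hgrow : exp d * (1 + (K - 1) * d) <= exp (K * d)).
  { rewrite Hsplit. apply Rmult_le_compat_l; [lra | apply exp_ineq1_le]. }
  assert (Hinv : exp d * exp (- d) = 1)
    by (rewrite <- exp_plus, Rplus_opp_r; apply exp_0).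
  assert (Hdec : exp d * (1 + - d) <= 1).
  { rewrite <- Hinv at 2. apply Rmult_le_compat_l; [lra | apply exp_ineq1_le]. }
  assert ((K - 1) * (exp d * (1 + - d)) <= (K - 1) * 1) by (apply Rmult_le_compat_l; lra).
  nra.
Qed.

Lemma scaled_exp_sub1_le K c cm : 0 <= K -> 1 <= cm -> cm <= c ->
  c * (exp (K / c) - 1) <= K + K ^ 2 * exp K / cm.
Proof.
  intros hK hcm hc. set (s := K / c).
  assert (hs0 : 0 <= s) by (apply Rle_mult_inv_pos; lra).
  assert (hsK : s <= K).
  { unfold s. apply Rmult_le_reg_r with c; [lra|]. field_simplify; nra. }
  assert (Hquad : c * (exp s - 1) <= c * (s + s ^ 2 * exp s))
    by (apply Rmult_le_compat_l; [lra | apply exp_sub1_le_quad; lra]).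
  assert (Hc : c * (s + s ^ 2 * exp s) = K + K ^ 2 * exp s / c) by (unfold s; field; lra).
  assert (K ^ 2 * exp s / c <= K ^ 2 * exp K / cm).
  { unfold Rdiv. apply Rmult_le_compat.
    - apply Rmult_le_pos; [apply pow_le; lra | left; apply exp_pos].
    - left; apply Rinv_0_lt_compat; lra.
    - apply Rmult_le_compat_l; [apply pow_le; lra | apply exp_le; lra].
    - apply Rinv_le_contravar; lra. }
  lra.
Qed.

Definition gL_rate (L : nat) : R := ln (INR L) + 1.
Definition gL_knee (L : nat) : R := 1 / gL_rate L.
Definition gL_scale (L : nat) : R := 1 / (INR L * (exp (gL_knee L) - 1)).

(* [2 * dual_rate L Cm] is the ratio [2 (1 + ln L) + B / Cm] of the theorem,
   with [B = 2 K^2 e^K] and [K = 1 + ln L]. *)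
Definition dual_rate (L Cm : nat) : R :=
  gL_rate L + gL_rate L ^ 2 * exp (gL_rate L) / INR Cm.

Section gL_shape.
Variable L : nat.
Hypothesis L_pos : (1 <= L)%nat.
Local Notation K := (gL_rate L).
Local Notation th := (gL_knee L).
Local Notation A := (gL_scale L).

Lemma INR_L_ge1 : 1 <= INR L.
Proof. apply (le_INR 1); exact L_pos. Qed.

Lemma gL_rate_ge1 : 1 <= K.
Proof.
  unfold gL_rate. destruct INR_L_ge1 as [Hlt | Heq].
  - pose proof (ln_increasing 1 (INR L) Rlt_0_1 Hlt). rewrite ln_1 in *. lra.
  - rewrite <- Heq, ln_1. lra.
Qed.

Lemma gL_knee_pos : 0 < th.
Proof. unfold gL_knee. pose proof gL_rate_ge1. apply Rdiv_lt_0_compat; lra. Qed.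

Lemma gL_knee_le1 : th <= 1.
Proof.
  unfold gL_knee. pose proof gL_rate_ge1.
  apply Rmult_le_reg_r with K; [lra|]. field_simplify; lra.
Qed.

Lemma exp_knee_sub1_pos : 0 < exp th - 1.
Proof. pose proof gL_knee_pos. pose proof (exp_ineq1 th ltac:(lra)). lra. Qed.

Lemma gL_scale_pos : 0 < A.
Proof.
  unfold gL_scale. pose proof exp_knee_sub1_pos. pose proof INR_L_ge1.
  apply Rdiv_lt_0_compat; [lra | apply Rmult_lt_0_compat; lra].
Qed.

Lemma gL_scale_rate_nonneg : 0 <= A / K.
Proof. pose proof gL_scale_pos. pose proof gL_rate_ge1. apply Rle_mult_inv_pos; lra. Qed.

Lemma gL_below_knee x : x <= th -> gL L x = (exp x - 1) * A.
Proof.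
  intro hx. unfold gL. fold K. fold th.
  destruct (Rle_dec x th); [|lra].
  unfold gL_scale. pose proof exp_knee_sub1_pos. pose proof INR_L_ge1. field. lra.
Qed.

Lemma gL_above_knee x : th <= x -> gL L x = exp ((x - 1) * K).
Proof.
  intro hx. unfold gL. fold K. fold th.
  destruct (Rle_dec x th) as [hle|]; [|reflexivity].
  assert (x = th) as -> by lra.
  pose proof exp_knee_sub1_pos. pose proof INR_L_ge1. pose proof gL_rate_ge1.
  replace ((th - 1) * K) with (- ln (INR L)) by (unfold gL_knee, gL_rate in *; field; lra).
  rewrite exp_Ropp, exp_ln by lra. field. lra.
Qed.

Lemma gL0 : gL L 0 = 0.
Proof. rewrite gL_below_knee by (pose proof gL_knee_pos; lra). rewrite exp_0. ring. Qed.

Lemma gL_le x y : x <= y -> gL L x <= gL L y.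
Proof.
  intro hxy. pose proof gL_scale_pos. pose proof gL_rate_ge1.
  assert (Hlow : forall u v, u <= v -> v <= th -> gL L u <= gL L v).
  { intros u v huv hv. rewrite !gL_below_knee by lra.
    apply Rmult_le_compat_r; [lra|]. pose proof (exp_le u v huv). lra. }
  assert (Hhigh : forall u v, th <= u -> u <= v -> gL L u <= gL L v).
  { intros u v hu huv. rewrite !gL_above_knee by lra.
    apply exp_le, Rmult_le_compat_r; lra. }
  destruct (Rle_dec y th); [now apply Hlow|].
  destruct (Rle_dec x th); [|apply Hhigh; lra].
  apply Rle_trans with (gL L th); [apply Hlow | apply Hhigh]; lra.
Qed.

Lemma gL_nonneg x : 0 <= x -> 0 <= gL L x.
Proof. intro. rewrite <- gL0. now apply gL_le. Qed.

Lemma gL_ge1 x : 1 <= x -> 1 <= gL L x.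
Proof.
  intro hx. pose proof gL_knee_le1. pose proof gL_rate_ge1.
  rewrite gL_above_knee by lra. apply exp_ge1, Rmult_le_pos; lra.
Qed.

Lemma gL_path_scale_le1 : INR L * (A / K) <= 1.
Proof.
  pose proof exp_knee_sub1_pos. pose proof gL_rate_ge1. pose proof INR_L_ge1.
  pose proof (exp_ineq1_le th).
  assert (Hth : K * th = 1) by (unfold gL_knee; field; lra).
  unfold gL_scale.
  replace (INR L * (1 / (INR L * (exp th - 1)) / K)) with (1 / (K * (exp th - 1)))
    by (field; lra).
  apply Rmult_le_reg_r with (K * (exp th - 1)); [nra|]. field_simplify; nra.
Qed.

(* The shift [A / K] is what makes [h := g_L + A / K] satisfy [h' <= K h] on
   both pieces, i.e. [h x * exp (- K x)] nonincreasing. *)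
Lemma gL_shift_growth x y : 0 <= x -> x <= y ->
  gL L y + A / K <= (gL L x + A / K) * exp (K * (y - x)).
Proof.
  intros hx hxy. pose proof gL_scale_pos. pose proof gL_rate_ge1.
  assert (Hlow : forall u v, 0 <= u -> u <= v -> v <= th ->
            gL L v + A / K <= (gL L u + A / K) * exp (K * (v - u))).
  { intros u v hu huv hv. rewrite !gL_below_knee by lra.
    replace v with (u + (v - u)) at 1 by ring. rewrite exp_plus.
    pose proof (exp_mul_sub1_ge K (v - u) ltac:(lra) ltac:(lra)) as Hconv.
    assert (1 <= exp u) by (apply exp_ge1; lra).
    assert (exp (v - u) <= exp (K * (v - u))) by (apply exp_le; nra).
    set (a := exp u) in *. set (b := exp (v - u)) in *. set (w := exp (K * (v - u))) in *.
    replace ((a * b - 1) * A + A / K) with (A * ((a - 1) * b + (b - 1) + 1 / K))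
      by (field; lra).
    replace (((a - 1) * A + A / K) * w) with (A * ((a - 1) * w + (w - 1) / K + 1 / K))
      by (field; lra).
    apply Rmult_le_compat_l; [lra|].
    assert ((a - 1) * b <= (a - 1) * w) by (apply Rmult_le_compat_l; lra).
    assert (b - 1 <= (w - 1) / K).
    { apply Rmult_le_reg_r with K; [lra|]. field_simplify; lra. }
    lra. }
  assert (Hhigh : forall u v, th <= u -> u <= v ->
            gL L v + A / K <= (gL L u + A / K) * exp (K * (v - u))).
  { intros u v hu huv. rewrite !gL_above_knee by lra.
    replace ((v - 1) * K) with ((u - 1) * K + K * (v - u)) by ring. rewrite exp_plus.
    assert (1 <= exp (K * (v - u))) by (apply exp_ge1; nra).
    pose proof gL_scale_rate_nonneg. pose proof (exp_pos ((u - 1) * K)). nra. }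
  destruct (Rle_dec y th); [now apply Hlow|].
  destruct (Rle_dec x th); [|apply Hhigh; lra].
  apply Rle_trans with ((gL L th + A / K) * exp (K * (y - th))); [apply Hhigh; lra|].
  replace (K * (y - x)) with (K * (th - x) + K * (y - th)) by ring.
  rewrite exp_plus, <- Rmult_assoc.
  apply Rmult_le_compat_r; [left; apply exp_pos | apply Hlow; lra].
Qed.

Lemma gL_increment_le (n C Cm : nat) : (1 <= Cm)%nat -> (Cm <= C)%nat ->
  INR C * (gL L (INR (S n) / INR C) - gL L (INR n / INR C))
  <= dual_rate L Cm * (gL L (INR n / INR C) + A / K).
Proof.
  intros hCm hC.
  assert (hcm : 1 <= INR Cm) by (apply (le_INR 1); lia).
  assert (hc : INR Cm <= INR C) by (apply le_INR; lia).
  pose proof gL_rate_ge1. pose proof gL_scale_rate_nonneg.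
  set (x := INR n / INR C).
  assert (hx : 0 <= x) by (apply Rle_mult_inv_pos; [apply pos_INR | lra]).
  assert (Hy : INR (S n) / INR C = x + 1 / INR C) by (unfold x; rewrite S_INR; field; lra).
  rewrite Hy.
  assert (0 <= 1 / INR C) by (apply Rle_mult_inv_pos; lra).
  pose proof (gL_shift_growth x (x + 1 / INR C) hx ltac:(lra)) as Hg.
  replace (K * (x + 1 / INR C - x)) with (K / INR C) in Hg by (field; lra).
  pose proof (scaled_exp_sub1_le K (INR C) (INR Cm) ltac:(lra) hcm hc) as Hexp.
  fold (dual_rate L Cm) in Hexp.
  set (h := gL L x + A / K) in *.
  assert (0 <= h) by (pose proof (gL_nonneg x hx); unfold h; lra).
  assert (Hd : gL L (x + 1 / INR C) - gL L x <= h * (exp (K / INR C) - 1))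
    by (unfold h in *; lra).
  apply Rle_trans with (h * (INR C * (exp (K / INR C) - 1))).
  - apply Rmult_le_compat_l with (r := INR C) in Hd; [|lra]. lra.
  - rewrite Rmult_comm. apply Rmult_le_compat_r; lra.
Qed.

Lemma dual_rate_ge1 Cm : (1 <= Cm)%nat -> 1 <= dual_rate L Cm.
Proof.
  intro hCm. pose proof gL_rate_ge1. unfold dual_rate.
  assert (0 <= K ^ 2 * exp K / INR Cm); [|lra].
  apply Rle_mult_inv_pos; [apply Rmult_le_pos; [apply pow_le; lra | left; apply exp_pos]|].
  apply lt_0_INR. lia.
Qed.
End gL_shape.

Definition slot_eq_dec (p q : nat * nat) : {p = q} + {p <> q}.
Proof. decide equality; apply Nat.eq_dec. Defined.

Lemma memlt_spec l t k : memlt l t k = true <-> In (l, t) k.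
Proof.
  unfold memlt. rewrite existsb_exists. split.
  - intros [[a b] [Hin Heq]]. apply andb_true_iff in Heq as [Ha Hb].
    apply Nat.eqb_eq in Ha, Hb. simpl in Ha, Hb. now subst.
  - intro Hin. exists (l, t). split; [exact Hin|]. simpl. now rewrite !Nat.eqb_refl.
Qed.

Lemma memlt_in_dec p k : memlt (fst p) (snd p) k = if in_dec slot_eq_dec p k then true else false.
Proof.
  destruct p as [l t]. simpl. destruct (in_dec slot_eq_dec (l, t) k) as [Hin | Hnin].
  - now apply memlt_spec.
  - destruct (memlt l t k) eqn:E; [apply memlt_spec in E; contradiction | reflexivity].
Qed.

Lemma walk_links N s d ls l : is_walk N s d ls -> In l ls -> (l < nL N)%nat.
Proof.
  revert s. induction ls as [|a ls IH]; simpl; intros s Hw Hl; [contradiction|].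
  destruct Hw as [Ha [_ Hw]]. destruct Hl as [<- | Hl]; [exact Ha | exact (IH _ Hw Hl)].
Qed.

Lemma valid_sched_link N P m k l t : valid_sched N P m k -> In (l, t) k -> (l < nL N)%nat.
Proof.
  intros [[Hw _] _] Hin. apply (walk_links N _ _ _ l Hw), in_map_iff. now exists (l, t).
Qed.

Lemma times_ok_ge lo hi ts t : times_ok lo hi ts -> In t ts -> (lo <= t)%nat.
Proof.
  revert lo. induction ts as [|a ts IH]; simpl; intros lo H Ht; [contradiction|].
  destruct H as [Ha H]. destruct Ht as [<- | Ht]; [lia|]. specialize (IH _ H Ht). lia.
Qed.

Lemma times_ok_NoDup lo hi ts : times_ok lo hi ts -> NoDup ts.
Proof.
  revert lo. induction ts as [|a ts IH]; simpl; intros lo; [constructor|].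
  intros [Ha H]. constructor.
  - intro Hin. pose proof (times_ok_ge _ _ _ _ H Hin). lia.
  - exact (IH _ H).
Qed.

Lemma valid_sched_NoDup N P m k : valid_sched N P m k -> NoDup k.
Proof. intros [_ Ht]. exact (NoDup_map_inv _ _ (times_ok_NoDup _ _ _ Ht)). Qed.

Lemma counts_S dec j l t : counts dec (S j) l t =
  (counts dec j l t + match dec j with Some k => if memlt l t k then 1 else 0 | None => 0 end)%nat.
Proof. simpl. unfold update. now destruct (dec j). Qed.

Lemma counts_mono dec j j' l t : (j <= j')%nat -> (counts dec j l t <= counts dec j' l t)%nat.
Proof. induction 1; [lia|]. rewrite counts_S. lia. Qed.

Lemma Cmin_le_cap N l : (l < nL N)%nat -> (Cmin N <= cap N l)%nat.
Proof.
  intro hl. unfold Cmin. assert (Hin : In l (seq 0 (nL N))) by (apply in_seq; lia).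
  induction (seq 0 (nL N)) as [|a s IH]; simpl in *; [contradiction|].
  destruct Hin as [-> | Hin]; [lia | specialize (IH Hin); lia].
Qed.

Lemma Cmin_pos N : (0 < nL N)%nat -> (forall l, (l < nL N)%nat -> (1 <= cap N l)%nat) ->
  (1 <= Cmin N)%nat.
Proof.
  intros hnL hcap. unfold Cmin.
  assert (Hall : forall l, In l (seq 0 (nL N)) -> (1 <= cap N l)%nat)
    by (intros l Hl; apply in_seq in Hl; apply hcap; lia).
  specialize (hcap 0%nat hnL).
  induction (seq 0 (nL N)) as [|a s IH]; simpl in *; [exact hcap|].
  pose proof (Hall a (or_introl eq_refl)). specialize (IH (fun l hl => Hall l (or_intror hl))). lia.
Qed.

Lemma INR_div_nonneg a b : 0 <= INR a / INR b.
Proof.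
  destruct b as [|b]; [rewrite Rdiv_0_r; lra|].
  apply Rle_mult_inv_pos; [apply pos_INR | apply lt_0_INR; lia].
Qed.

Section beta_counts.
Variable L : nat.
Hypothesis L_pos : (1 <= L)%nat.
Variable N : network.

Lemma beta_of_nonneg n l t : 0 <= beta_of L N n l t.
Proof. apply gL_nonneg; [exact L_pos | apply INR_div_nonneg]. Qed.

Lemma beta_of_zero l t : beta_of L N (fun _ _ => 0%nat) l t = 0.
Proof. unfold beta_of. rewrite Rdiv_0_l. exact (gL0 L L_pos). Qed.

Lemma beta_of_le (n1 n2 : nat -> nat -> nat) l t : (n1 l t <= n2 l t)%nat ->
  beta_of L N n1 l t <= beta_of L N n2 l t.
Proof.
  intro h. apply gL_le; [exact L_pos|]. unfold Rdiv.
  apply Rmult_le_compat_r; [|now apply le_INR].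
  destruct (cap N l); [simpl; rewrite Rinv_0; lra | left; apply Rinv_0_lt_compat, lt_0_INR; lia].
Qed.

Lemma beta_of_ge1 n l t : (1 <= cap N l)%nat -> (cap N l <= n l t)%nat -> 1 <= beta_of L N n l t.
Proof.
  intros hc hn. apply gL_ge1; [exact L_pos|].
  apply le_INR in hc, hn. simpl in hc.
  apply Rmult_le_reg_r with (INR (cap N l)); [lra|]. field_simplify; lra.
Qed.

Lemma sum_beta_nonneg n k : 0 <= sum_beta (beta_of L N n) k.
Proof. apply sumR_nonneg. intros; apply beta_of_nonneg. Qed.

Lemma sum_beta_le (n1 n2 : nat -> nat -> nat) k : (forall l t, n1 l t <= n2 l t)%nat ->
  sum_beta (beta_of L N n1) k <= sum_beta (beta_of L N n2) k.
Proof. intro h. apply sumR_le. intros; now apply beta_of_le. Qed.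

Lemma beta_of_le_sum_beta n k l t : In (l, t) k -> beta_of L N n l t <= sum_beta (beta_of L N n) k.
Proof.
  apply (sumR_ge_elem (fun p => beta_of L N n (fst p) (snd p))). intros; apply beta_of_nonneg.
Qed.
End beta_counts.

Section algorithm3.
Variable L : nat.
Hypothesis L_pos : (1 <= L)%nat.
Variable N : network.
Variable P : packets.
Variable dec : nat -> option sched.
Hypothesis cap_pos : forall l, (l < nL N)%nat -> (1 <= cap N l)%nat.
Hypothesis run : alg3_run L N P dec.

Local Notation beta_before m := (beta_of L N (counts dec m)).

Lemma run_accept m k : (m < nM P)%nat -> dec m = Some k ->
  valid_sched N P m k /\
  (forall k', valid_sched N P m k' ->
     1 - sum_beta (beta_before m) k' <= 1 - sum_beta (beta_before m) k) /\
  0 < 1 - sum_beta (beta_before m) k.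
Proof. intros hm hd. generalize (run m hm). cbv zeta. now rewrite hd. Qed.

Lemma run_drop m : (m < nM P)%nat -> dec m = None ->
  forall k', valid_sched N P m k' -> 1 - sum_beta (beta_before m) k' <= 0.
Proof. intros hm hd. generalize (run m hm). cbv zeta. now rewrite hd. Qed.

Lemma counts_le_cap m l t : (m <= nM P)%nat -> (l < nL N)%nat -> (counts dec m l t <= cap N l)%nat.
Proof.
  induction m as [|m IH]; intros hm hl; [simpl; lia|].
  rewrite counts_S. specialize (IH ltac:(lia) hl).
  destruct (dec m) as [k|] eqn:Ed; [|lia].
  destruct (memlt l t k) eqn:Em; [|lia].
  destruct (Nat.le_gt_cases (cap N l) (counts dec m l t)) as [Hfull | Hfree]; [|lia].
  exfalso. destruct (run_accept m k ltac:(lia) Ed) as [_ [_ Hgain]].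
  apply memlt_spec in Em.
  pose proof (beta_of_le_sum_beta L L_pos N (counts dec m) k l t Em).
  pose proof (beta_of_ge1 L L_pos N (counts dec m) l t (cap_pos l hl) Hfull).
  lra.
Qed.

Lemma In_alg_X_upto m e : In e (alg_X_upto dec m) ->
  exists j k, (j < m)%nat /\ dec j = Some k /\ e = ((j, k), 1).
Proof.
  induction m as [|m IH]; simpl; intro He; [contradiction|].
  apply in_app_or in He as [He | He].
  - destruct (IH He) as [j [k [hj Hjk]]]. exists j, k. split; [lia | exact Hjk].
  - destruct (dec m) as [k|] eqn:Ed; [|contradiction]. destruct He as [<- | []].
    exists m, k. auto.
Qed.

Lemma alg_X_upto_NoDup m : NoDup (map fst (alg_X_upto dec m)).
Proof.
  induction m as [|m IH]; simpl; [constructor|]. rewrite map_app. apply NoDup_app; [exact IH | |].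
  - destruct (dec m); simpl; repeat constructor; auto.
  - intros a Ha Hb. apply in_map_iff in Ha as [e [<- He]].
    apply In_alg_X_upto in He as [j [k [hj [_ ->]]]].
    destruct (dec m); simpl in Hb; [|contradiction]. destruct Hb as [Hb | []].
    injection Hb. lia.
Qed.

Lemma alg_X_upto_packet_load m j :
  sumR (map snd (filter (fun e => Nat.eqb (fst (fst e)) j) (alg_X_upto dec m))) <= 1.
Proof.
  assert (H : sumR (map snd (filter (fun e => Nat.eqb (fst (fst e)) j) (alg_X_upto dec m)))
              <= if Nat.ltb j m then 1 else 0).
  { induction m as [|m IH]; simpl; [lra|]. rewrite filter_app, map_app, sumR_app.
    assert (Hlast : sumR (map snd (filter (fun e => Nat.eqb (fst (fst e)) j)
        match dec m with Some k => [((m, k), 1)] | None => [] end)) <= if Nat.eqb m j then 1 else 0)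
      by (destruct (dec m); simpl; destruct (Nat.eqb m j); simpl; lra).
    destruct (Nat.ltb_spec j m); destruct (Nat.ltb_spec j (S m)); destruct (Nat.eqb_spec m j);
      try lia; lra. }
  destruct (Nat.ltb j m); lra.
Qed.

Lemma alg_X_upto_link_load m l t :
  sumR (map snd (filter (fun e => memlt l t (snd (fst e))) (alg_X_upto dec m)))
  = INR (counts dec m l t).
Proof.
  induction m as [|m IH]; [reflexivity|]. cbn [alg_X_upto].
  rewrite filter_app, map_app, sumR_app, IH, counts_S, plus_INR.
  destruct (dec m) as [k|]; simpl; [destruct (memlt l t k)|]; simpl; ring.
Qed.

Lemma alg_X_feasible : schedule_feasible N P 1 (alg_X P dec).
Proof.
  unfold alg_X. split; [apply alg_X_upto_NoDup|]. split; [|split].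
  - intros e He. apply In_alg_X_upto in He as [j [k [hj [Ed ->]]]]. simpl.
    destruct (run_accept j k hj Ed) as [Hv _]. split; [exact hj | split; [exact Hv | lra]].
  - intros j _. apply alg_X_upto_packet_load.
  - intros l t hl. rewrite alg_X_upto_link_load, Rmult_1_l.
    apply le_INR, counts_le_cap; [lia | exact hl].
Qed.

Lemma alg_dual_feasible : dual_feasible N P (alg_alpha L N dec) (alg_beta L N P dec).
Proof.
  split; [|split].
  - intros m k hm hv. unfold alg_alpha, alg_beta.
    assert (sum_beta (beta_before m) k <= sum_beta (beta_of L N (counts dec (nM P))) k)
      by (apply sum_beta_le; [exact L_pos | intros; apply counts_mono; lia]).
    destruct (dec m) as [k0|] eqn:Ed.
    + destruct (run_accept m k0 hm Ed) as [_ [Hbest _]]. specialize (Hbest k hv). lra.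
    + pose proof (run_drop m hm Ed k hv). lra.
  - intros m hm. unfold alg_alpha. destruct (dec m) as [k0|] eqn:Ed; [|lra].
    destruct (run_accept m k0 hm Ed) as [_ [_ Hgain]]. lra.
  - intros l t _. apply Rle_ge, beta_of_nonneg, L_pos.
Qed.
End algorithm3.

Lemma objective_le_dual_weighted N P alpha beta X :
  dual_feasible N P alpha beta -> schedule_feasible N P 1 X ->
  objective X <= sumR (map (fun e => snd e * alpha (fst (fst e))) X)
                 + sumR (map (fun e => snd e * sum_beta beta (snd (fst e))) X).
Proof.
  intros [Hdual _] [_ [HX _]]. unfold objective. rewrite <- sumR_plus. apply sumR_le.
  intros e He. destruct (HX e He) as [hm [hv hx]]. specialize (Hdual _ _ hm hv).
  assert (snd e * 1 <= snd e * (alpha (fst (fst e)) + sum_beta beta (snd (fst e))))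
    by (apply Rmult_le_compat_l; lra).
  lra.
Qed.

Section competitive.
Variable L : nat.
Hypothesis L_pos : (1 <= L)%nat.
Variable N : network.
Variable P : packets.
Variable dec : nat -> option sched.
Hypothesis nL_pos : (0 < nL N)%nat.
Hypothesis cap_pos : forall l, (l < nL N)%nat -> (1 <= cap N l)%nat.
Hypothesis sched_len : forall m k, (m < nM P)%nat -> valid_sched N P m k -> (length k <= L)%nat.
Hypothesis run : alg3_run L N P dec.

Local Notation beta_before m := (beta_of L N (counts dec m)).
Local Notation F := (dual_rate L (Cmin N)).

Definition beta_step (j : nat) (p : nat * nat) : R :=
  beta_before (S j) (fst p) (snd p) - beta_before j (fst p) (snd p).

Definition weighted_beta_step (j : nat) : R :=
  match dec j with
  | Some k => sumR (map (fun p => INR (cap N (fst p)) * beta_step j p) k)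
  | None => 0
  end.

Definition accepted (j : nat) : R := match dec j with Some _ => 1 | None => 0 end.

Lemma beta_before_telescope n l t :
  beta_before n l t = sumR (map (fun j => beta_step j (l, t)) (seq 0 n)).
Proof.
  induction n as [|n IH].
  - exact (beta_of_zero L L_pos N l t).
  - rewrite seq_S, map_app, sumR_app, <- IH. unfold beta_step. simpl. ring.
Qed.

Lemma beta_step_nonneg j p : 0 <= beta_step j p.
Proof.
  unfold beta_step.
  pose proof (beta_of_le L L_pos N (counts dec j) (counts dec (S j)) (fst p) (snd p)
    (counts_mono dec j (S j) _ _ (Nat.le_succ_diag_r j))).
  lra.
Qed.

Lemma beta_step_drop j p : dec j = None -> beta_step j p = 0.
Proof. intro Ed. unfold beta_step, beta_of. rewrite counts_S, Ed, Nat.add_0_r. ring. Qed.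

Lemma beta_step_off_sched j k p : dec j = Some k -> ~ In p k -> beta_step j p = 0.
Proof.
  intros Ed Hp. destruct p as [l t]. unfold beta_step, beta_of. cbn [fst snd]. rewrite counts_S, Ed.
  destruct (memlt l t k) eqn:Em; [apply memlt_spec in Em; contradiction|].
  rewrite Nat.add_0_r. ring.
Qed.

Lemma beta_step_on_sched j k l t : dec j = Some k -> In (l, t) k -> (l < nL N)%nat ->
  INR (cap N l) * beta_step j (l, t)
  <= F * (beta_before j l t + gL_scale L / gL_rate L).
Proof.
  intros Ed Hin hl. unfold beta_step, beta_of. cbn [fst snd]. rewrite counts_S, Ed.
  apply memlt_spec in Hin. rewrite Hin, Nat.add_1_r.
  apply gL_increment_le; [exact L_pos | apply Cmin_pos; assumption | apply Cmin_le_cap, hl].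
Qed.

Lemma alg_X_upto_objective m : objective (alg_X_upto dec m) = sumR (map accepted (seq 0 m)).
Proof.
  induction m as [|m IH]; [reflexivity|]. unfold objective in *. cbn [alg_X_upto].
  rewrite seq_S, !map_app, !sumR_app, IH. unfold accepted; simpl. destruct (dec m); simpl; ring.
Qed.

Lemma alpha_plus_beta_step_le j : (j < nM P)%nat ->
  alg_alpha L N dec j + weighted_beta_step j <= 2 * F * accepted j.
Proof.
  intro hj. unfold alg_alpha, weighted_beta_step, accepted.
  destruct (dec j) as [k|] eqn:Ed; [|lra].
  destruct (run_accept L N P dec run j k hj Ed) as [Hv [_ Hgain]].
  set (s := sum_beta (beta_before j) k) in *.
  set (c := gL_scale L / gL_rate L).
  assert (Hs : 0 <= s) by (apply sum_beta_nonneg, L_pos).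
  assert (Hc : 0 <= c) by (apply gL_scale_rate_nonneg, L_pos).
  assert (HF : 1 <= F) by (apply dual_rate_ge1, Cmin_pos; assumption).
  assert (Hstep : sumR (map (fun p => INR (cap N (fst p)) * beta_step j p) k)
                  <= F * s + INR (length k) * (F * c)).
  { apply Rle_trans with (sumR (map (fun p => F * beta_before j (fst p) (snd p) + F * c) k)).
    - apply sumR_le. intros [l t] Hin. cbn [fst snd]. rewrite <- Rmult_plus_distr_l.
      apply (beta_step_on_sched j k l t Ed Hin (valid_sched_link _ _ _ _ _ _ Hv Hin)).
    - rewrite sumR_plus, sumR_scal. apply Rplus_le_compat_l, sumR_le_length. intros; lra. }
  assert (Hlen : INR (length k) * c <= 1).
  { apply Rle_trans with (INR L * c); [|apply gL_path_scale_le1, L_pos].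
    apply Rmult_le_compat_r; [exact Hc | apply le_INR, (sched_len j k hj Hv)]. }
  assert ((F - 1) * s <= F - 1) by (apply Rmult_le_reg_l with 1; nra).
  assert (F * (INR (length k) * c) <= F)
    by (rewrite <- (Rmult_1_r F) at 2; apply Rmult_le_compat_l; lra).
  nra.
Qed.

Lemma alpha_part_le X : schedule_feasible N P 1 X ->
  sumR (map (fun e => snd e * alg_alpha L N dec (fst (fst e))) X)
  <= sumR (map (alg_alpha L N dec) (seq 0 (nM P))).
Proof.
  intros [_ [HX [Hload _]]].
  destruct (alg_dual_feasible L L_pos N P dec run) as [_ [Halpha _]].
  rewrite (sumR_ext _ (fun e => sumR (map (fun j =>
      if Nat.eqb (fst (fst e)) j then snd e * alg_alpha L N dec j else 0) (seq 0 (nM P))))).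
  2:{ intros e He. rewrite sumR_seq_indicator; [reflexivity|]. destruct (HX e He). lia. }
  rewrite sumR_comm. apply sumR_le. intros j Hj. apply in_seq in Hj.
  rewrite (sumR_ext _
      (fun e => alg_alpha L N dec j * (if Nat.eqb (fst (fst e)) j then snd e else 0)))
    by (intros e _; destruct (Nat.eqb (fst (fst e)) j); ring).
  rewrite sumR_scal, <- (sumR_filter (fun e => Nat.eqb (fst (fst e)) j) snd).
  specialize (Hload j ltac:(lia)). specialize (Halpha j ltac:(lia)).
  rewrite <- (Rmult_1_r (alg_alpha L N dec j)) at 2. apply Rmult_le_compat_l; lra.
Qed.

Lemma beta_step_load_le X j : schedule_feasible N P 1 X -> (j < nM P)%nat ->
  sumR (map (fun e : (nat * sched) * R => snd e * sumR (map (beta_step j) (snd (fst e)))) X)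
  <= weighted_beta_step j.
Proof.
  intros [_ [HX [_ Hcap]]] hj. unfold weighted_beta_step.
  destruct (dec j) as [kj|] eqn:Ed.
  2:{ rewrite sumR_eq0; [lra|]. intros e _.
      rewrite sumR_eq0; [ring|]. intros p _. now apply beta_step_drop. }
  destruct (run_accept L N P dec run j kj hj Ed) as [Hvj _].
  rewrite (sumR_ext _ (fun e => sumR (map (fun p =>
      (if memlt (fst p) (snd p) (snd (fst e)) then snd e else 0) * beta_step j p) kj))).
  2:{ intros e He. destruct (HX e He) as [_ [Hve _]].
      rewrite (sumR_ext (beta_step j)
        (fun p => if in_dec slot_eq_dec p kj then beta_step j p else 0)).
      2:{ intros p _. destruct (in_dec slot_eq_dec p kj) as [|Hp]; [reflexivity|].
          exact (beta_step_off_sched j kj p Ed Hp). }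
      rewrite (sumR_restrict_comm slot_eq_dec)
        by (eapply valid_sched_NoDup; eassumption).
      rewrite <- sumR_scal. apply sumR_ext. intros p _. rewrite memlt_in_dec.
      destruct (in_dec slot_eq_dec p (snd (fst e))); simpl; ring. }
  rewrite sumR_comm. apply sumR_le. intros [l t] Hin. cbn [fst snd].
  rewrite sumR_scalr, <- (sumR_filter (fun e => memlt l t (snd (fst e))) snd).
  pose proof (beta_step_nonneg j (l, t)).
 
  apply Rmult_le_compat_r; [lra|]. rewrite <- (Rmult_1_l (INR (cap N l))).
  exact (Hcap l t (valid_sched_link _ _ _ _ _ _ Hvj Hin)).
Qed.

Lemma beta_part_le X : schedule_feasible N P 1 X ->
  sumR (map (fun e => snd e * sum_beta (alg_beta L N P dec) (snd (fst e))) X)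
  <= sumR (map weighted_beta_step (seq 0 (nM P))).
Proof.
  intro HX.
  rewrite (sumR_ext _ (fun e : (nat * sched) * R => sumR (map (fun j =>
      snd e * sumR (map (beta_step j) (snd (fst e)))) (seq 0 (nM P))))).
  - rewrite sumR_comm. apply sumR_le. intros j Hj. apply in_seq in Hj.
    apply beta_step_load_le; [exact HX | lia].
  - intros e _. rewrite sumR_scal. f_equal. unfold sum_beta, alg_beta.
    rewrite (sumR_ext _ (fun p => sumR (map (fun j => beta_step j p) (seq 0 (nM P))))).
    + apply sumR_comm.
    + intros [l t] _. apply beta_before_telescope.
Qed.

Lemma alg3_objective_bound X : schedule_feasible N P 1 X ->
  objective X <= 2 * F * objective (alg_X P dec).
Proof.
  intro HX.
  pose proof (objective_le_dual_weighted _ _ _ _ X (alg_dual_feasible L L_pos N P dec run) HX).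
  pose proof (alpha_part_le X HX). pose proof (beta_part_le X HX).
  assert (sumR (map (alg_alpha L N dec) (seq 0 (nM P)))
          + sumR (map weighted_beta_step (seq 0 (nM P)))
          <= 2 * F * sumR (map accepted (seq 0 (nM P)))).
  { rewrite <- sumR_plus, <- sumR_scal. apply sumR_le. intros j Hj. apply in_seq in Hj.
    apply alpha_plus_beta_step_le. lia. }
  unfold alg_X. rewrite alg_X_upto_objective. lra.
Qed.
End competitive.

Theorem theorem3 :
  forall L : nat, (1 <= L)%nat ->
  exists B : R,
  forall (N : network) (P : packets) (dec : nat -> option sched),
    (0 < nL N)%nat ->
    (forall l, (l < nL N)%nat -> (1 <= cap N l)%nat) ->
    (forall m, (m < nM P)%nat -> (1 <= arr P m)%nat) ->
    (forall m1 m2, (m1 <= m2)%nat -> (m2 < nM P)%nat -> (arr P m1 <= arr P m2)%nat) ->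
    (forall m k, (m < nM P)%nat -> valid_sched N P m k -> (length k <= L)%nat) ->
    alg3_run L N P dec ->
    schedule_feasible N P 1 (alg_X P dec) /\
    dual_feasible N P (alg_alpha L N dec) (alg_beta L N P dec) /\
    (forall X : lpsol, schedule_feasible N P 1 X ->
       objective X <= (2 * (1 + ln (INR L)) + B / INR (Cmin N)) * objective (alg_X P dec)).
Proof.
  intros L L_pos. exists (2 * (gL_rate L ^ 2 * exp (gL_rate L))).
  intros N P dec nL_pos cap_pos _ _ sched_len run.
  split; [exact (alg_X_feasible L L_pos N P dec cap_pos run)|].
  split; [exact (alg_dual_feasible L L_pos N P dec run)|].
  intros X HX.
  replace (2 * (1 + ln (INR L)) + 2 * (gL_rate L ^ 2 * exp (gL_rate L)) / INR (Cmin N))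
    with (2 * dual_rate L (Cmin N)) by (unfold dual_rate, gL_rate, Rdiv; ring).
  exact (alg3_objective_bound L L_pos N P dec nL_pos cap_pos sched_len run X HX).
Qed.
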